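(* Let $\mathbf{y}\in\mathbb{R}^{2s}$ be an arbitrary $s$-sparse vector. Then for all $\mathbf{x}\in\mathbb{R}^{2s}$, \[ \|\mathbf{x}^s-\mathbf{y}\|_2\le\sqrt3\,\|\mathbf{x}-\mathbf{y}\|_2 . \]
   Context: $\mathbf{x}^s$ denotes $\mathbf{x}$ with all but its $s$ largest-magnitude entries set to zero; a vector is $s$-sparse if it has at most $s$ nonzero entries. *)

From HB Require Import structures.
From mathcomp Require Import all_boot all_order all_algebra.
From mathcomp Require Import reals.
Set Implicit Arguments. Unset Strict Implicit. Unset Printing Implicit Defensive.
Import Order.TTheory GRing.Theory Num.Theory.
Local Open Scope ring_scope.

Section Defs.
Variable R : realType.

Definition l2norm n (v : 'I_n -> R) : R := Num.sqrt (\sum_(i < n) v i ^+ 2).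

Definition sparse n (s : nat) (v : 'I_n -> R) : Prop :=
  (#|[set i | v i != 0%R]| <= s)%N.

Definition top_support n (s : nat) (x : 'I_n -> R) (S : {set 'I_n}) : Prop :=
  #|S| = s /\ forall i j, i \in S -> j \notin S -> `|x j| <= `|x i|.

Definition restrict n (x : 'I_n -> R) (S : {set 'I_n}) : 'I_n -> R :=
  fun i => if i \in S then x i else 0.

(* hard thresholding x^s w.r.t. a given (tie-broken) choice S *)
Definition hard_thr n s (x : 'I_n -> R) (S : {set 'I_n}) (_ : top_support s x S) :=
  restrict x S.

End Defs.

(* Let T be the support of y and d i := (x i - y i)^2.  Off S, the error of
   x^s is y i ^2 <= 2 d i + 2 x i ^2, and x i is nonzero in this bound only on
   T :\: S.  Since #|T| <= #|S|, the set T :\: S is no larger than S :\: T, and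
   every entry of x on S dominates every entry off S, so the mass of x^2 on
   T :\: S is at most its mass on S :\: T, where y vanishes and x^2 = d.
   Altogether ||x^s - y||^2 <= sum_S d + 2 sum_(~S) d + 2 sum_S d
   = 3 ||x - y||^2. *)
From HB Require Import structures.
From mathcomp Require Import all_boot all_order all_algebra.
From mathcomp Require Import reals.
From mathcomp Require Import ring lra.
Set Implicit Arguments. Unset Strict Implicit. Unset Printing Implicit Defensive.
Import Order.TTheory GRing.Theory Num.Theory.
Local Open Scope ring_scope.

Lemma ler_sqr_norm (R : realDomainType) (a b : R) :
  `|a| <= `|b| -> a ^+ 2 <= b ^+ 2.
Proof.
by rewrite -(real_normK (num_real a)) -(real_normK (num_real b)) ler_sqr ?nnegrE.
Qed.

Lemma sqr_le_twice_sqrD (R : realDomainType) (a b : R) :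
  (a + b) ^+ 2 <= 2 * a ^+ 2 + 2 * b ^+ 2.
Proof.
rewrite -subr_ge0.
have -> : 2 * a ^+ 2 + 2 * b ^+ 2 - (a + b) ^+ 2 = (a - b) ^+ 2 by ring.
exact: sqr_ge0.
Qed.

Lemma cardsD_leq (T : finType) (A B : {set T}) :
  (#|A| <= #|B|)%N -> (#|A :\: B| <= #|B :\: A|)%N.
Proof.
by rewrite -(cardsID B A) -(cardsID A B) setIC leq_add2l.
Qed.

Lemma sum_sqr_dominated (R : realDomainType) (T : finType) (x : T -> R)
    (A B : {set T}) :
  (#|A| <= #|B|)%N -> (forall i j, i \in A -> j \in B -> `|x i| <= `|x j|) ->
  \sum_(i in A) x i ^+ 2 <= \sum_(i in B) x i ^+ 2.
Proof.
move=> cardAB xAB.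
have [B0 | [j0 j0B]] := set_0Vmem B.
  move: cardAB; rewrite B0 cards0 leqn0 cards_eq0 => /eqP ->.
  by rewrite !big_set0.
have [j jB jmin] := arg_minP (fun j => `|x j|) j0B.
apply: (@le_trans _ _ (\sum_(i in A) x j ^+ 2)).
  by apply: ler_sum => i iA; apply/ler_sqr_norm/xAB.
apply: (@le_trans _ _ (\sum_(i in B) x j ^+ 2)).
  rewrite !sumr_const -(subnKC cardAB) mulrnDr lerDl.
  by rewrite mulrn_wge0 ?sqr_ge0.
by apply: ler_sum => i iB; apply/ler_sqr_norm/jmin.
Qed.

Section HardThresholding.

Variables (R : realType) (n s : nat) (x y : 'I_n -> R) (S : {set 'I_n}).
Hypotheses (y_sparse : sparse s y) (S_top : top_support s x S).

Let T := [set i | y i != 0].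
Let d i := (x i - y i) ^+ 2.

Lemma sum_sqr_restrict_sub :
  \sum_i (restrict x S i - y i) ^+ 2 =
  \sum_(i in S) d i + \sum_(i in ~: S) y i ^+ 2.
Proof.
rewrite (bigID (mem S)) /=; congr (_ + _); apply: eq_big => i.
- by [].
- by rewrite /restrict => ->.
- by rewrite inE.
- by rewrite /restrict => /negbTE ->; rewrite sub0r sqrrN.
Qed.

Lemma sum_sqr_off_top :
  \sum_(i in ~: S) y i ^+ 2 <=
  2 * \sum_(i in ~: S) d i + 2 * \sum_(i in T :\: S) x i ^+ 2.
Proof.
have -> : \sum_(i in T :\: S) x i ^+ 2 =
          \sum_(i in ~: S) (if y i != 0 then x i ^+ 2 else 0).
  rewrite big_mkcond [RHS]big_mkcond; apply: eq_bigr => i _.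
  by rewrite !inE; case: (i \in S); case: (y i != 0).
rewrite !mulr_sumr -big_split /=; apply: ler_sum => i _.
case: ifP => [_ | /negbFE/eqP ->]; last first.
  by rewrite expr0n /= mulr0 addr0 mulr_ge0 ?sqr_ge0.
by have := sqr_le_twice_sqrD (y i - x i) (x i); rewrite subrK -opprB sqrrN.
Qed.

Lemma sum_sqr_top_outside_support :
  \sum_(i in T :\: S) x i ^+ 2 <= \sum_(i in S) d i.
Proof.
have cardTS : (#|T :\: S| <= #|S :\: T|)%N.
  by apply: cardsD_leq; rewrite S_top.1; exact: y_sparse.
apply: le_trans (sum_sqr_dominated (x := x) cardTS _) _.
  by move=> i j; rewrite !inE => /andP[iS _] /andP[_ jS]; exact: S_top.2.
have -> : \sum_(i in S :\: T) x i ^+ 2 = \sum_(i in S :\: T) d i.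
  by apply: eq_bigr => i; rewrite !inE negbK /d => /andP[/eqP -> _]; rewrite subr0.
rewrite [leRHS](big_setID T) /= setDE lerDr.
by apply: sumr_ge0 => i _; exact: sqr_ge0.
Qed.

Lemma sum_sqr_hard_thr_sub :
  \sum_i (restrict x S i - y i) ^+ 2 <= 3 * \sum_i d i.
Proof.
have split_d : \sum_i d i = \sum_(i in S) d i + \sum_(i in ~: S) d i.
  by rewrite (bigID (mem S)) /=; congr (_ + _); apply: eq_bigl => i; rewrite inE.
rewrite sum_sqr_restrict_sub split_d.
have d_ge0 : 0 <= \sum_(i in ~: S) d i by apply: sumr_ge0 => i _; exact: sqr_ge0.
have := sum_sqr_off_top; have := sum_sqr_top_outside_support; lra.
Qed.

End HardThresholding.

Theorem proposition5 (R : realType) (s : nat) (y : 'I_(2 * s) -> R)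
  (hy : sparse s y) (x : 'I_(2 * s) -> R) (S : {set 'I_(2 * s)})
  (hS : top_support s x S) :
  l2norm (fun i => hard_thr hS i - y i) <= Num.sqrt 3 * l2norm (fun i => x i - y i).
Proof.
rewrite /l2norm -sqrtrM // ler_wsqrtr //.
exact: sum_sqr_hard_thr_sub hy hS.
Qed.
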